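(* Let $\mathcal{G}$ be a $k$-uniform hypergraph with $n$ vertices and $m$ edges. Then \[ \sum_{j=1}^n\alpha_j(\mathcal{G})\leq\frac{(k-1)km}{n-1}. \]
   Context: A $k$-uniform hypergraph $\mathcal{G}$ has vertex set $V(\mathcal{G})=[n]$ and edge set $E(\mathcal{G})$ of $k$-element subsets of $V(\mathcal{G})$. For $\mathbf{x}\in\mathbb{R}^n$, $\mathcal{L}_\mathcal{G}\mathbf{x}^k=\sum_{\{i_1,\ldots,i_k\}\in E(\mathcal{G})}\left(x_{i_1}^k+\cdots+x_{i_k}^k-k\,x_{i_1}\cdots x_{i_k}\right)$; the inverse Perron value of vertex $j$ is $\alpha_j(\mathcal{G})=\min\{\mathcal{L}_\mathcal{G}\mathbf{x}^k : \mathbf{x}\in\mathbb{R}^n_+,\ \sum_{i=1}^n x_i^k=1,\ x_j=0\}$. *)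

From HB Require Import structures.
From mathcomp Require Import all_boot all_order all_algebra.
From mathcomp Require Import classical_sets reals.
Set Implicit Arguments. Unset Strict Implicit. Unset Printing Implicit Defensive.
Import Order.TTheory GRing.Theory Num.Theory.
Local Open Scope ring_scope.
Local Open Scope classical_set_scope.

Definition kuniform (n k : nat) (E : {set {set 'I_n}}) : Prop :=
  forall e, e \in E -> #|e| = k.

Definition laplacian_form {R : realType} (n k : nat) (E : {set {set 'I_n}})
  (x : 'I_n -> R) : R :=
  \sum_(e in E) ((\sum_(i in e) x i ^+ k) - k%:R * \prod_(i in e) x i).

(* inverse Perron value of vertex j:
   min { L_G x^k : x >= 0, sum_i x_i^k = 1, x_j = 0 }
   (the minimum exists by compactness; we take the infimum of the set of values). *)
Definition inv_perron {R : realType} (n k : nat) (E : {set {set 'I_n}})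
  (j : 'I_n) : R :=
  inf [set laplacian_form k E x | x in
        [set x : 'I_n -> R | (forall i, 0 <= x i) /\
                             \sum_(i < n) x i ^+ k = 1 /\ x j = 0]].

From HB Require Import structures.
From mathcomp Require Import all_boot all_order all_algebra.
From mathcomp Require Import classical_sets reals exp.
Import Order.TTheory GRing.Theory Num.Theory.
Local Open Scope ring_scope.

(* Bound each alpha_j by the value of the form at the feasible vector that
   vanishes at j and equals (n-1)^(-1/k) elsewhere.  An edge avoiding j then
   contributes k/(n-1) - k/(n-1) = 0 and an edge through j contributes
   (k-1)/(n-1), so alpha_j <= (k-1) deg(j)/(n-1); summing over j and using
   sum_j deg(j) = k m gives the bound. *)

Definition vertex_degree {n : nat} (E : {set {set 'I_n}}) (j : 'I_n) : nat :=
  #|[set e in E | j \in e]|.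

Lemma sum_vertex_degree {n k : nat} {E : {set {set 'I_n}}} :
  kuniform k E -> (\sum_(j < n) vertex_degree E j = k * #|E|)%N.
Proof.
move=> hE.
have deg_sum j : vertex_degree E j = (\sum_(e in E) (j \in e))%N.
  by rewrite /vertex_degree -sum1_card big_mkcond [RHS]big_mkcond;
     apply: eq_bigr => e _; rewrite inE; case: (e \in E); case: (j \in e).
rewrite (eq_bigr _ (fun j _ => deg_sum j)) exchange_big /=.
rewrite mulnC -sum_nat_const; apply: eq_bigr => e eE.
by rewrite -(hE e eE) -sum1_card [RHS]big_mkcond.
Qed.

Lemma powR_invnK (R : realType) (k : nat) (a : R) :
  (0 < k)%N -> 0 <= a -> (a `^ k%:R^-1) ^+ k = a.
Proof.
move=> k_gt0 a_ge0.
by rewrite -powR_mulrn ?powR_ge0 // -powRrM mulVf ?pnatr_eq0 -?lt0n // powRr1.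
Qed.

Lemma sum_neq_card (T : finType) (A : {pred T}) (x : T) :
  (\sum_(i in A) (i != x) = #|A| - (x \in A))%N.
Proof.
rewrite (cardD1 x A) addKn -sum1_card [LHS]big_mkcond [RHS]big_mkcond /=.
by apply: eq_bigr => i _; rewrite !inE andbC; case: (i \in A); case: (i != x).
Qed.

Section InversePerronBound.
Context (R : realType) {n k : nat} (E : {set {set 'I_n}}).
Hypothesis k_gt0 : (0 < k)%N.

Lemma le1_of_sum_powers_eq1 (x : 'I_n -> R) (i : 'I_n) :
  (forall l, 0 <= x l) -> \sum_(l < n) x l ^+ k = 1 -> x i <= 1.
Proof.
move=> x_ge0 x_norm; rewrite -(expr_le1 k_gt0) // -x_norm (bigD1 i) //=.
by rewrite lerDl sumr_ge0 // => l _; rewrite exprn_ge0.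
Qed.

Lemma laplacian_form_ge (x : 'I_n -> R) :
  (forall i, 0 <= x i <= 1) -> - (k%:R * #|E|%:R) <= laplacian_form k E x.
Proof.
move=> x01.
have -> : - (k%:R * #|E|%:R) = \sum_(e in E) - k%:R :> R.
  by rewrite sumr_const mulNrn mulr_natr.
apply: ler_sum => e _.
have prod_le1 : \prod_(i in e) x i <= 1.
  by apply: prodr_ile1 => i _; apply: x01.
apply: (@le_trans _ _ (0 - k%:R * \prod_(i in e) x i)).
  by rewrite add0r lerN2 ler_piMr.
by rewrite lerD2r sumr_ge0 // => i _; rewrite exprn_ge0 //; case/andP: (x01 i).
Qed.

(* [inf] is a lower bound only of sets bounded from below. *)
Lemma inv_perron_le_laplacian_form (x : 'I_n -> R) (j : 'I_n) :
  (forall i, 0 <= x i) -> \sum_(i < n) x i ^+ k = 1 -> x j = 0 ->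
  inv_perron k E j <= laplacian_form k E x.
Proof.
move=> x_ge0 x_norm xj0; apply: ge_inf; last by exists x.
exists (- (k%:R * #|E|%:R)) => _ [y [y_ge0 [y_norm _]] <-].
apply: laplacian_form_ge => i; rewrite y_ge0.
exact: le1_of_sum_powers_eq1.
Qed.

Definition punctured (t : R) (j : 'I_n) (i : 'I_n) : R :=
  if i == j then 0 else t.

Lemma punctured_pow (t : R) (j i : 'I_n) :
  punctured t j i ^+ k = (i != j)%:R * t ^+ k.
Proof.
by rewrite /punctured; case: eqP => _; rewrite ?mul1r // expr0n eqn0Ngt k_gt0 mul0r.
Qed.

Lemma sum_punctured_pow (t : R) (j : 'I_n) :
  \sum_(i < n) punctured t j i ^+ k = (n - 1)%:R * t ^+ k.
Proof.
under eq_bigr do rewrite punctured_pow.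
by rewrite -big_distrl /= -natr_sum sum_neq_card card_ord.
Qed.

Lemma edge_term_punctured (t : R) (j : 'I_n) (e : {set 'I_n}) : #|e| = k ->
  \sum_(i in e) punctured t j i ^+ k - k%:R * \prod_(i in e) punctured t j i
  = if j \in e then (k - 1)%:R * t ^+ k else 0.
Proof.
move=> card_e.
rewrite [\sum_(i in e) _](eq_bigr _ (fun i _ => punctured_pow t j i)).
rewrite -big_distrl /= -natr_sum sum_neq_card card_e; case: ifP => je.
  by rewrite (bigD1 j je) /= /punctured eqxx mul0r mulr0 subr0.
rewrite /= subn0 (eq_bigr (fun=> t)) ?prodr_const ?card_e ?mulr_natl ?subrr //.
by move=> i ie; rewrite /punctured; case: eqP => // ij; rewrite -ij ie in je.
Qed.

Lemma laplacian_form_punctured (t : R) (j : 'I_n) : kuniform k E ->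
  laplacian_form k E (punctured t j)
  = (vertex_degree E j)%:R * ((k - 1)%:R * t ^+ k).
Proof.
move=> hE; rewrite /laplacian_form.
rewrite (eq_bigr _ (fun e eE => @edge_term_punctured t j e (hE e eE))).
rewrite -big_mkcondr [RHS]mulr_natl -sumr_const.
by apply: eq_bigl => e; rewrite inE.
Qed.

Lemma inv_perron_le_degree (j : 'I_n) : (1 < n)%N -> kuniform k E ->
  inv_perron (R := R) k E j <= (k - 1)%:R * (vertex_degree E j)%:R / (n - 1)%:R.
Proof.
move=> n_gt1 hE; set c : R := (n - 1)%:R^-1.
have c_ge0 : 0 <= c by rewrite invr_ge0 ler0n.
have tk : (c `^ k%:R^-1) ^+ k = c by apply: powR_invnK.
apply: (le_trans (inv_perron_le_laplacian_form (punctured (c `^ k%:R^-1) j) j _ _ _)).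
- by move=> i; rewrite /punctured; case: eqP => _; rewrite ?powR_ge0.
- rewrite sum_punctured_pow tk mulfV // pnatr_eq0 subn_eq0 -ltnNge //.
- by rewrite /punctured eqxx.
by rewrite laplacian_form_punctured // tk mulrCA mulrA.
Qed.
End InversePerronBound.

Theorem corollary3p7 (R : realType) (n k : nat) (E : {set {set 'I_n}}) :
  (2 <= k)%N -> (2 <= n)%N -> kuniform k E ->
  \sum_(j < n) inv_perron (R := R) k E j
    <= ((k - 1)%:R * k%:R * (#|E|)%:R) / (n - 1)%:R.
Proof.
move=> k_ge2 n_ge2 hE; have k_gt0 : (0 < k)%N by apply: leq_trans k_ge2.
apply: le_trans (ler_sum _ (fun j _ => inv_perron_le_degree R E k_gt0 j n_ge2 hE)) _.
by rewrite -mulr_suml -mulr_sumr -natr_sum (sum_vertex_degree hE) natrM mulrA.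
Qed.
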